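(* Let $\mathcal{B}(\mathbb{R}^d)$ be the Boolean logic of Borel subsets of $\mathbb{R}^d$ (order $\subset$, orthocomplement $A\mapsto A^c=\mathbb{R}^d\setminus A$, join $\cup$, meet $\cap$), and let $\mathcal{C}(\mathbb{R}^{d+1})$ be the logic of causally complete subsets of Minkowski space described in the context. The causal completion map $$\mathrm{c}:\mathcal{B}(\mathbb{R}^d)\to\mathcal{C}(\mathbb{R}^{d+1}),\qquad \mathrm{c}(A):=(\{0\}\times A)''$$ is an injective $\sigma$-additive logic homomorphism (so that $\mathrm{c}(\mathcal{B}(\mathbb{R}^d))$ is a Boolean sublogic of $\mathcal{C}(\mathbb{R}^{d+1})$), and it is covariant with respect to the actions of the Euclidean group $\mathbf{E}(d)$ on $\mathcal{B}(\mathbb{R}^d)$ (by $A\mapsto g(A)$) and on $\mathcal{C}(\mathbb{R}^{d+1})$ (by $\mathcal{O}\mapsto \{(x_0,g\mathbf{x}):(x_0,\mathbf{x})\in\mathcal{O}\}$), i.e. $\mathrm{c}(g(A))=g\,\mathrm{c}(A)$.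
   Context: Minkowski space $\mathbb{R}^{d+1}$ has points $x=(x_0,\mathbf{x})\in\mathbb{R}\times\mathbb{R}^d$ and Lorentz product $x\cdot y=x_0y_0-\mathbf{x}\cdot\mathbf{y}$, $x^2=x\cdot x$. Write $x\sim y$ iff $x\neq y$ and $(x-y)^2\le 0$ (non-timelike separation). For $\mathcal{O}\subset\mathbb{R}^{d+1}$ its causal complement is $\mathcal{O}'=\{x: x\sim y\ \forall y\in\mathcal{O}\}$; $\mathcal{O}$ is causally complete if $\mathcal{O}=\mathcal{O}''$. $\mathcal{C}(\mathbb{R}^{d+1})$ is the set of causally complete subsets; with order $\subset$, orthocomplementation $\mathcal{O}\mapsto\mathcal{O}'$, $0=\emptyset$, $1=\mathbb{R}^{d+1}$, join $\mathcal{O}_1\vee\mathcal{O}_2=(\mathcal{O}_1\cup\mathcal{O}_2)''$ (and arbitrary joins $(\bigcup\mathcal{O}_i)''$), meet $\cap$, it is a complete orthomodular orthocomplemented lattice (a logic). A logic is a $\sigma$-complete orthocomplemented orthomodular bounded lattice. A logic homomorphism preserves $0,1$, the orthocomplement, binary joins and meets. A map $\varphi$ between such lattices is $\sigma$-additive if $\varphi(\bigvee_{A\in\mathcal{L}_0}A)=\bigvee_{A\in\mathcal{L}_0}\varphi(A)$ for every countable subset $\mathcal{L}_0$ whose distinct elements are pairwise separated ($A\le B^\perp$). *)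

From HB Require Import structures.
From mathcomp Require Import all_boot all_order all_algebra.
From mathcomp Require Import all_classical all_reals all_analysis.
Set Implicit Arguments. Unset Strict Implicit. Unset Printing Implicit Defensive.
Import Order.TTheory GRing.Theory Num.Theory.
Import numFieldNormedType.Exports.
Local Open Scope ring_scope.
Local Open Scope classical_set_scope.

Section Minkowski.
Variables (R : realType) (d : nat).

Definition mpoint := (R * 'rV[R]_d)%type.

Definition dotv (x y : 'rV[R]_d) : R := \sum_(i < d) x ord0 i * y ord0 i.

Definition lorentz (x y : mpoint) : R := x.1 * y.1 - dotv x.2 y.2.

Definition msub (x y : mpoint) : mpoint := (x.1 - y.1, x.2 - y.2).

Definition nontimelike (x y : mpoint) : Prop :=
  x <> y /\ lorentz (msub x y) (msub x y) <= 0.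

Definition ccompl (O : set mpoint) : set mpoint :=
  [set x | forall y, O y -> nontimelike x y].

Definition causally_complete (O : set mpoint) : Prop := O = ccompl (ccompl O).

Definition cjoin2 (O1 O2 : set mpoint) : set mpoint := ccompl (ccompl (O1 `|` O2)).
Definition cjoin (F : nat -> set mpoint) : set mpoint :=
  ccompl (ccompl (\bigcup_n F n)).

Definition borel : set (set 'rV[R]_d) := <<s [set U : set 'rV[R]_d | @open 'rV[R]_d U] >>.

Definition cmap (A : set 'rV[R]_d) : set mpoint :=
  ccompl (ccompl [set x | x.1 = 0 /\ A x.2]).

Definition euclidean (g : 'M[R]_d * 'rV[R]_d) : Prop := g.1 *m g.1^T = 1%:M.
Definition eact (g : 'M[R]_d * 'rV[R]_d) (x : 'rV[R]_d) : 'rV[R]_d := x *m g.1 + g.2.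

Definition eact_set (g : 'M[R]_d * 'rV[R]_d) (A : set 'rV[R]_d) : set 'rV[R]_d :=
  eact g @` A.
Definition eact_mset (g : 'M[R]_d * 'rV[R]_d) (O : set mpoint) : set mpoint :=
  [set y | exists2 x, O x & y = (x.1, eact g x.2)].

Definition separated_family (F : nat -> set 'rV[R]_d) : Prop :=
  forall i j, F i <> F j -> F i `<=` ~` F j.

End Minkowski.

From mathcomp Require Import all_boot all_order all_algebra.
From mathcomp Require Import all_classical all_reals all_analysis.
From mathcomp Require Import ring.
Import Order.TTheory GRing.Theory Num.Theory.
Import numFieldNormedType.Exports.
Local Open Scope ring_scope.
Local Open Scope classical_set_scope.
Set Implicit Arguments. Unset Strict Implicit.

(* A point (0, z) of the time-zero slice is causally related to (t, x) (not
   separated by ~) exactly when z lies in the shadow of (t, x): the open ball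
   of radius |t| about x, together with x.  Two points (t, x) and (s, y) are
   causally related iff their shadows meet: if (t - s)^2 > |x - y|^2, the point
   dividing [x, y] in the ratio |t| : |s| lies in both.  Hence the causal
   complement of the set of points whose shadow lies in D is the set of points
   whose shadow lies in ~` D, and ({0} x A)'' is the set of points whose shadow
   lies in A.  Taking "points whose shadow lies in A" commutes with arbitrary
   intersections, is injective on the slice, and commutes with Euclidean
   motions because these map shadows to shadows. *)

Section Shadows.
Variables (R : realType) (d : nat).
Implicit Types (x y z : 'rV[R]_d) (p q : mpoint R d) (A D : set 'rV[R]_d).

Definition sqnorm x : R := dotv x x.

Lemma sqnorm_ge0 x : 0 <= sqnorm x.
Proof. by apply: sumr_ge0 => i _; rewrite -expr2 sqr_ge0. Qed.

Lemma sqnormZ (a : R) x : sqnorm (a *: x) = a ^+ 2 * sqnorm x.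
Proof. by rewrite /sqnorm /dotv mulr_sumr; apply: eq_bigr => i _; rewrite !mxE; ring. Qed.

Lemma sqnorm0 : sqnorm (0 : 'rV[R]_d) = 0.
Proof. by rewrite -(scale0r 0) sqnormZ expr0n mul0r. Qed.

Lemma sqnormN x : sqnorm (- x) = sqnorm x.
Proof. by rewrite -scaleN1r sqnormZ expr2 mulrNN !mul1r. Qed.

Lemma sqnormB x y : sqnorm (x - y) = sqnorm (y - x).
Proof. by rewrite -opprB sqnormN. Qed.

Lemma sqnorm_mulmx (Q : 'M[R]_d) x : Q *m Q^T = 1%:M -> sqnorm (x *m Q) = sqnorm x.
Proof.
have dotvE u v : dotv u v = (u *m v^T) ord0 ord0.
  by rewrite mxE; apply: eq_bigr => i _; rewrite mxE.
by move=> QQT; rewrite /sqnorm !dotvE trmx_mul mulmxA -(mulmxA x) QQT mulmx1.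
Qed.

Lemma lorentz_msub p q :
  lorentz (msub p q) (msub p q) = (p.1 - q.1) ^+ 2 - sqnorm (p.2 - q.2).
Proof. by rewrite /lorentz expr2. Qed.

Definition shadow p : set 'rV[R]_d :=
  [set z | z = p.2 \/ sqnorm (z - p.2) < p.1 ^+ 2].

Definition dependence D : set (mpoint R d) := [set p | shadow p `<=` D].

Lemma shadow_foot p : shadow p p.2.
Proof. by left. Qed.

Lemma shadow0 x : shadow (0, x) = [set x].
Proof.
apply/seteqP; split=> z /=; last by move->; left.
by case=> // ; rewrite expr0n /= ltNge sqnorm_ge0.
Qed.

Lemma shadow_normr (t : R) x : shadow (`|t|, x) = shadow (t, x).
Proof. by rewrite /shadow /= real_normK ?num_real. Qed.

Lemma nontimelike_foot p z : nontimelike p (0, z) <-> ~ shadow p z.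
Proof.
case: p => t x; rewrite /nontimelike lorentz_msub /= subr0 sqnormB subr_le0.
split=> [[neq le] shz|nshadow].
  case: shz => /= [ezx|lt].
  - move: le; rewrite ezx subrr sqnorm0 => le.
    have t0 : t = 0 by apply/eqP; rewrite -sqrf_eq0 eq_le sqr_ge0 le.
    by apply: neq; rewrite t0 ezx.
  - by move: lt; rewrite ltNge le.
split; first by case=> _ ezx; apply: nshadow; left.
by rewrite leNgt; apply/negP => lt; apply: nshadow; right.
Qed.

Lemma ccompl_slice A : ccompl [set p | p.1 = 0 /\ A p.2] = dependence (~` A).
Proof.
apply/seteqP; split=> p /= cp.
- by move=> z shz Az; have /nontimelike_foot := cp (0, z) (conj erefl Az).
- by move=> [_ z] /= [-> Az]; apply/nontimelike_foot => /cp.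
Qed.

Lemma dependence_foot D x : dependence D (0, x) <-> D x.
Proof. by rewrite /dependence /= shadow0 sub1set inE. Qed.

Lemma shadow_segment (a c : R) x y :
  sqnorm (y - x) < c ^+ 2 -> shadow (a, x) (x + (a / c) *: (y - x)).
Proof.
move=> lt; have [->|a0] := eqVneq a 0; first by left; rewrite mul0r scale0r addr0.
have c2_gt0 : 0 < c ^+ 2 by apply: le_lt_trans lt; apply: sqnorm_ge0.
have c0 : c != 0 by apply: contraTneq c2_gt0 => ->; rewrite expr0n ltxx.
right; rewrite /= (addrC x) addrK sqnormZ.
have -> : a ^+ 2 = (a / c) ^+ 2 * c ^+ 2 by rewrite -exprMn divfK.
by rewrite ltr_pM2l // lt_def sqr_ge0 sqrf_eq0 andbT mulf_neq0 ?invr_eq0.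
Qed.

Lemma sqr_subr_le_normD (t s : R) : (t - s) ^+ 2 <= (`|t| + `|s|) ^+ 2.
Proof.
rewrite -(real_normK (num_real (t - s))).
by rewrite lerXn2r ?nnegrE ?addr_ge0 // ler_normB.
Qed.

Lemma shadows_meet p q : ~ nontimelike p q -> exists z, shadow p z /\ shadow q z.
Proof.
case: p q => [t x] [s y] causal.
have [[_ <-]|neq] := pselect ((t, x) = (s, y)); first by exists x; split; left.
have lt : sqnorm (y - x) < (`|t| + `|s|) ^+ 2.
  have : 0 < lorentz (msub (t, x) (s, y)) (msub (t, x) (s, y)).
    by rewrite ltNge; apply/negP => le; apply: causal.
  rewrite lorentz_msub subr_gt0 /= sqnormB => lt.
  exact: lt_le_trans lt (sqr_subr_le_normD t s).
have c0 : `|t| + `|s| != 0.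
  by apply: contraTneq lt => ->; rewrite expr0n -leNgt sqnorm_ge0.
exists (x + (`|t| / (`|t| + `|s|)) *: (y - x)); split.
  by rewrite -shadow_normr; apply: shadow_segment.
have -> : x + (`|t| / (`|t| + `|s|)) *: (y - x) = y + (`|s| / (`|t| + `|s|)) *: (x - y).
  have -> : `|t| / (`|t| + `|s|) = 1 - `|s| / (`|t| + `|s|).
    by apply/eqP; rewrite eq_sym subr_eq -mulrDl divff.
  by rewrite scalerBl scale1r addrA (addrC x) subrK -scalerN opprB.
by rewrite -shadow_normr; apply: shadow_segment; rewrite sqnormB.
Qed.

Lemma ccompl_dependence D : ccompl (dependence D) = dependence (~` D).
Proof.
apply/seteqP; split=> p /= cp.
- move=> z shz Dz; apply: (nontimelike_foot p z).1 (cp _ _) shz.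
  exact/dependence_foot.
- move=> q Dq; apply: contrapT => /shadows_meet [z [pz qz]].
  exact: cp z pz (Dq z qz).
Qed.

Lemma dependence0 : dependence set0 = set0.
Proof. by apply/seteqP; split=> p // /(_ p.2 (shadow_foot p)). Qed.

Lemma dependenceT : dependence setT = setT.
Proof. by apply/seteqP; split. Qed.

Lemma dependenceI A B : dependence (A `&` B) = dependence A `&` dependence B.
Proof.
apply/seteqP; split=> p /=; first by move=> pAB; split=> z /pAB [].
by move=> [pA pB] z pz; split; [apply: pA | apply: pB].
Qed.

Lemma dependence_bigcap (F : nat -> set 'rV[R]_d) :
  dependence (\bigcap_n F n) = \bigcap_n dependence (F n).
Proof.
apply/seteqP; split=> p /=; first by move=> pF n _ z /pF; apply.
by move=> pF z pz n _; apply: pF.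
Qed.

Lemma dependence_inj : injective dependence.
Proof.
move=> A B eAB; apply/seteqP; split=> x.
- by move/dependence_foot; rewrite eAB => /dependence_foot.
- by move/dependence_foot; rewrite -eAB => /dependence_foot.
Qed.

Lemma ccomplU (O1 O2 : set (mpoint R d)) :
  ccompl (O1 `|` O2) = ccompl O1 `&` ccompl O2.
Proof.
apply/seteqP; split=> p /=; first by move=> cp; split=> q Oq; apply: cp; [left|right].
by move=> [cp1 cp2] q [/cp1|/cp2].
Qed.

Lemma ccompl_bigcup (F : nat -> set (mpoint R d)) :
  ccompl (\bigcup_n F n) = \bigcap_n ccompl (F n).
Proof.
apply/seteqP; split=> p /=; first by move=> cp n _ q Fq; apply: cp; exists n.
by move=> cp q [n _ /cp]; apply.
Qed.

Lemma cjoin2_dependence A B :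
  cjoin2 (dependence A) (dependence B) = dependence (A `|` B).
Proof.
by rewrite /cjoin2 ccomplU !ccompl_dependence -dependenceI ccompl_dependence -setCU setCK.
Qed.

Lemma cjoin_dependence (F : nat -> set 'rV[R]_d) :
  cjoin (fun n => dependence (F n)) = dependence (\bigcup_n F n).
Proof.
rewrite /cjoin ccompl_bigcup; under eq_bigcapr do rewrite ccompl_dependence.
by rewrite -dependence_bigcap ccompl_dependence -setC_bigcup setCK.
Qed.

Lemma cmapE A : cmap A = dependence A.
Proof. by rewrite /cmap ccompl_slice ccompl_dependence setCK. Qed.
End Shadows.

Section EuclideanCovariance.
Variables (R : realType) (d : nat) (g : 'M[R]_d * 'rV[R]_d).
Hypothesis g_euclidean : euclidean g.

Definition einv : 'M[R]_d * 'rV[R]_d := (g.1^T, - (g.2 *m g.1^T)).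

Lemma eactK : cancel (eact g) (eact einv).
Proof.
by move=> x; rewrite /eact /= mulmxDl -mulmxA g_euclidean mulmx1 addrK.
Qed.

Lemma eactVK : cancel (eact einv) (eact g).
Proof.
move=> y; rewrite /eact /= mulmxDl -mulmxA mulmx1C // mulmx1 mulNmx.
by rewrite -mulmxA mulmx1C // mulmx1 subrK.
Qed.

Lemma sqnorm_eactB x y : sqnorm (eact g x - eact g y) = sqnorm (x - y).
Proof. by rewrite /eact opprD addrACA subrr addr0 -mulmxBl sqnorm_mulmx. Qed.

Lemma shadow_eact (t : R) x z : shadow (t, eact g x) (eact g z) <-> shadow (t, x) z.
Proof.
rewrite /shadow /= sqnorm_eactB; split=> -[ezx|lt]; [left|right|left|right] => //.
- exact: can_inj eactK _ _ ezx.
- by rewrite ezx.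
Qed.

Lemma dependence_eact A : dependence (eact_set g A) = eact_mset g (dependence A).
Proof.
apply/seteqP; split=> -[t y] /= dep.
- exists (t, eact einv y) => /=; last by rewrite eactVK.
  move=> z shz; have [a Aa /(can_inj eactK) <- //] : eact_set g A (eact g z).
  by apply: dep; rewrite -[y]eactVK; apply/shadow_eact.
- case: dep => -[s x] /= dep [-> ->] w shw.
  exists (eact einv w); last by rewrite eactVK.
  by apply: dep; apply/shadow_eact; rewrite eactVK.
Qed.
End EuclideanCovariance.

Theorem lemma2p7 (R : realType) (d : nat) :
  (* c maps Borel sets into causally complete sets *)
  (forall A : set 'rV[R]_d, borel A -> causally_complete (cmap A))
  (* preserves 0 and 1 *)
  /\ cmap (set0 : set 'rV[R]_d) = set0
  /\ cmap (setT : set 'rV[R]_d) = setT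
  (* preserves orthocomplement *)
  /\ (forall A : set 'rV[R]_d, borel A -> cmap (~` A) = ccompl (cmap A))
  (* preserves binary joins and meets *)
  /\ (forall A B : set 'rV[R]_d, borel A -> borel B -> cmap (A `|` B) = cjoin2 (cmap A) (cmap B))
  /\ (forall A B : set 'rV[R]_d, borel A -> borel B -> cmap (A `&` B) = cmap A `&` cmap B)
  (* sigma-additivity *)
  /\ (forall F : nat -> set 'rV[R]_d, (forall n, borel (F n)) -> separated_family F ->
        cmap (\bigcup_n F n) = cjoin (fun n => cmap (F n)))
  (* injectivity *)
  /\ (forall A B : set 'rV[R]_d, borel A -> borel B -> cmap A = cmap B -> A = B)
  (* E(d)-covariance *)
  /\ (forall (g : 'M[R]_d * 'rV[R]_d) (A : set 'rV[R]_d), euclidean g -> borel A ->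
        cmap (eact_set g A) = eact_mset g (cmap A)).
Proof.
split; first by move=> A _; rewrite /causally_complete cmapE !ccompl_dependence setCK.
split; first by rewrite cmapE dependence0.
split; first by rewrite cmapE dependenceT.
split; first by move=> A _; rewrite !cmapE ccompl_dependence.
split; first by move=> A B _ _; rewrite !cmapE cjoin2_dependence.
split; first by move=> A B _ _; rewrite !cmapE dependenceI.
split.
  move=> F _ _; rewrite cmapE -cjoin_dependence.
  by congr cjoin; apply: funext => n; rewrite cmapE.
split; first by move=> A B _ _; rewrite !cmapE => /dependence_inj.
by move=> g A g_euclidean _; rewrite !cmapE dependence_eact.
Qed.
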